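(* Let $(B,M,A,\rho,e,r,c)$ be a $\mathbf{k}$-bimodule with factorization structure. Then the map $\Delta:\mathbf{k}\oplus(B,\cdot_e)\to A$ defined by $\Delta(\lambda,b)=\lambda 1_A+r\big(\rho(b)(c(1_A))\big)$ is a morphism of unital $\mathbf{k}$-algebras.
   Context: $\mathbf{k}$ is a commutative $\mathbb{Q}$-algebra. A $\mathbf{k}$-bimodule is $(B,M,A,\rho)$ with $A,B$ unital $\mathbf{k}$-algebras, $M$ a right $A$-module and $\rho:B\to\mathrm{End}_A(M)$ an algebra morphism; a factorization structure is $(e,r,c)$ with $e\in B$, $r:M\to A$, $c:A\to M$ right $A$-module morphisms and $\rho(e)=c\circ r$. For $e\in B$, $\mathbf{k}\oplus(B,\cdot_e)$ is the unital algebra on $\mathbf{k}\oplus B$ with product $(\lambda,b)(\lambda',b')=(\lambda\lambda',\lambda b'+\lambda'b+beb')$ and unit $(1,0)$. *)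

From HB Require Import structures.
From mathcomp Require Import all_boot all_order all_algebra.
Set Implicit Arguments. Unset Strict Implicit. Unset Printing Implicit Defensive.
Import GRing.Theory.
Local Open Scope ring_scope.

Definition Qalgebra (k : comPzRingType) : Prop :=
  forall n : nat, exists y : k, n.+1%:R * y = 1.

(* A right A-module is represented as a left module over the converse ring
   A^c : for a : A and m : M, (a *: m) stands for m . a. *)

Definition is_End_A (k : comPzRingType) (A : algType k) (M : lmodType A^c)
    (f : M -> M) : Prop :=
  (forall m m' : M, f (m + m') = f m + f m') /\
  (forall (a : A^c) (m : M), f (a *: m) = a *: f m).

(* rho : B -> End_A(M) is a morphism of unital k-algebras; the k-algebra
   structure of End_A(M) is pointwise addition, composition, identity, and
   scaling by lambda acting as right multiplication by lambda 1_A. *)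
Definition is_rep (k : comPzRingType) (A B : algType k) (M : lmodType A^c)
    (rho : B -> M -> M) : Prop :=
  [/\ (forall b, is_End_A (rho b)),
      (forall b b' m, rho (b + b') m = rho b m + rho b' m),
      (forall (l : k) b m, rho (l *: b) m = ((l%:A : A) : A^c) *: rho b m),
      (forall b b' m, rho (b * b') m = rho b (rho b' m)) &
      (forall m, rho 1 m = m)].

Definition is_rmod_morph_to (k : comPzRingType) (A : algType k)
    (M : lmodType A^c) (r : M -> A) : Prop :=
  (forall m m' : M, r (m + m') = r m + r m') /\
  (forall (a : A^c) (m : M), r (a *: m) = r m * (a : A)).

Definition is_rmod_morph_from (k : comPzRingType) (A : algType k)
    (M : lmodType A^c) (c : A -> M) : Prop :=
  (forall x y : A, c (x + y) = c x + c y) /\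
  (forall x a : A, c (x * a) = (a : A^c) *: c x).

Definition bimodule_factorization (k : comPzRingType) (A B : algType k)
    (M : lmodType A^c) (rho : B -> M -> M) (e : B) (r : M -> A) (c : A -> M)
    : Prop :=
  [/\ is_rep rho, is_rmod_morph_to r, is_rmod_morph_from c &
      (forall m, rho e m = c (r m))].

(* The unital algebra k (+) (B, ._e), on the carrier k * B. *)
Definition ke_one (k : comPzRingType) (B : algType k) : k * B := (1, 0).
Definition ke_add (k : comPzRingType) (B : algType k) (x y : k * B) : k * B :=
  (x.1 + y.1, x.2 + y.2).
Definition ke_scale (k : comPzRingType) (B : algType k) (l : k) (x : k * B)
    : k * B := (l * x.1, l *: x.2).
Definition ke_mul (k : comPzRingType) (B : algType k) (e : B) (x y : k * B)
    : k * B :=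
  (x.1 * y.1, x.1 *: y.2 + y.1 *: x.2 + x.2 * e * y.2).

Definition Delta (k : comPzRingType) (A B : algType k) (M : lmodType A^c)
    (rho : B -> M -> M) (r : M -> A) (c : A -> M) (x : k * B) : A :=
  x.1%:A + r (rho x.2 (c 1)).

(** The composite b |-> r (rho b (c 1)) turns the product x e y of B into the
   product of A: since c is right A-linear, c (r m) = c 1 . r m, so
   rho (x e y) (c 1) = rho x (c (r (rho y (c 1)))) = rho x (c 1) . r (rho y (c 1)),
   and applying the right A-linear map r gives r (rho x (c 1)) * r (rho y (c 1)).
   The product of k (+) (B, ._e) is exactly the one making lambda 1_A + this
   composite multiplicative. *)
From HB Require Import structures.
From mathcomp Require Import all_boot all_order all_algebra.
Set Implicit Arguments. Unset Strict Implicit. Unset Printing Implicit Defensive.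
Import GRing.Theory.
Local Open Scope ring_scope.

Lemma morph_add0 (U V : zmodType) (f : U -> V) :
  {morph f : x y / x + y} -> f 0 = 0.
Proof. by move=> fD; apply: (@addrI _ (f 0)); rewrite -fD !addr0. Qed.

Section FactorizationMorphism.

Variables (k : comPzRingType) (A B : algType k) (M : lmodType A^c).
Variables (rho : B -> M -> M) (e : B) (r : M -> A) (c : A -> M).

Hypothesis rho_End : forall b, is_End_A (rho b).
Hypothesis rhoD : forall b b' m, rho (b + b') m = rho b m + rho b' m.
Hypothesis rhoZ : forall (l : k) b m, rho (l *: b) m = ((l%:A : A) : A^c) *: rho b m.
Hypothesis rhoM : forall b b' m, rho (b * b') m = rho b (rho b' m).
Hypothesis r_morph : is_rmod_morph_to r.
Hypothesis c_morph : is_rmod_morph_from c.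
Hypothesis rho_e : forall m, rho e m = c (r m).

Definition delta (b : B) : A := r (rho b (c 1)).

Lemma DeltaE (x : k * B) : Delta rho r c x = x.1%:A + delta x.2.
Proof. by []. Qed.

Lemma deltaD : {morph delta : b b' / b + b'}.
Proof. by move=> b b'; rewrite /delta rhoD (proj1 r_morph). Qed.

Lemma delta0 : delta 0 = 0.
Proof. exact: morph_add0 deltaD. Qed.

Lemma deltaZ (l : k) (b : B) : delta (l *: b) = l *: delta b.
Proof. by rewrite /delta rhoZ (proj2 r_morph) mulr_algr. Qed.

Lemma delta_mul_e (b b' : B) : delta (b * e * b') = delta b * delta b'.
Proof.
have [_ cZ] := c_morph; have [_ rZ] := r_morph.
have c_r m : c (r m) = (r m : A^c) *: c 1 by rewrite -cZ mul1r.
by rewrite /delta !rhoM rho_e c_r (proj2 (rho_End b)) rZ.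
Qed.

Lemma Delta_ke_one : Delta rho r c (@ke_one k B) = 1.
Proof. by rewrite DeltaE delta0 addr0 scale1r. Qed.

Lemma Delta_ke_add (x y : k * B) :
  Delta rho r c (ke_add x y) = Delta rho r c x + Delta rho r c y.
Proof. by rewrite !DeltaE /= scalerDl deltaD addrACA. Qed.

Lemma Delta_ke_scale (l : k) (x : k * B) :
  Delta rho r c (ke_scale l x) = l *: Delta rho r c x.
Proof. by rewrite !DeltaE /= deltaZ scalerDr scalerA. Qed.

Lemma Delta_ke_mul (x y : k * B) :
  Delta rho r c (ke_mul e x y) = Delta rho r c x * Delta rho r c y.
Proof.
rewrite !DeltaE /= !deltaD !deltaZ delta_mul_e.
rewrite mulrDl !mulrDr mulr_algl mulr_algr -scalerAl mul1r scalerA.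
by rewrite !addrA.
Qed.

End FactorizationMorphism.

Theorem mainTheorem15 (k : comPzRingType) (A B : algType k)
    (M : lmodType A^c) (rho : B -> M -> M) (e : B) (r : M -> A) (c : A -> M) :
  Qalgebra k ->
  bimodule_factorization rho e r c ->
  [/\ Delta rho r c (@ke_one k B) = 1,
      (forall x y, Delta rho r c (ke_add x y) = Delta rho r c x + Delta rho r c y),
      (forall (l : k) x, Delta rho r c (ke_scale l x) = l *: Delta rho r c x) &
      (forall x y, Delta rho r c (ke_mul e x y) = Delta rho r c x * Delta rho r c y)].
Proof.
move=> _ [[rho_End rhoD rhoZ rhoM _] r_morph c_morph rho_e]; split.
- exact: Delta_ke_one rhoD r_morph.
- exact: Delta_ke_add rhoD r_morph.
- exact: Delta_ke_scale rhoZ r_morph.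
- exact: Delta_ke_mul rho_End rhoD rhoZ rhoM r_morph c_morph rho_e.
Qed.
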